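(* Let $n\le 4$ and let $S$ be a real symmetric positive-definite $n\times n$ matrix. Then $S$ is Venkov-reduced with respect to $I_n$, i.e. $S\bullet I_n\le (gSg^{T})\bullet I_n$ for all $g\in GL_n(\mathbb Z)$, if and only if $gSg^{T}$ is Minkowski-reduced for some permutation matrix $g\in GL_n(\mathbb Z)$.
   Context: $S\bullet T:=\mathrm{Trace}(ST)$ for symmetric matrices $S,T$. Let $\mathbf e_1,\dots,\mathbf e_n$ be the standard basis of $\mathbb R^n$; a set $\{v_1,\dots,v_i\}\subset\mathbb Z^n$ is primitive if it is a subset of a basis of $\mathbb Z^n$. A symmetric positive-definite $S=(s_{ij})$ is Minkowski-reduced if for each $i=1,\dots,n$, $s_{ii}=\min\{v^{T}Sv: \{\mathbf e_1,\dots,\mathbf e_{i-1},v\}\text{ is a primitive set of }\mathbb Z^n\}$. *)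

From HB Require Import structures.
From mathcomp Require Import all_boot all_order all_algebra all_fingroup.
From mathcomp Require Import reals.
Set Implicit Arguments. Unset Strict Implicit. Unset Printing Implicit Defensive.
Import Order.TTheory GRing.Theory Num.Theory.
Local Open Scope ring_scope.

Definition bullet (R : realType) (n : nat) (S T : 'M[R]_n) : R := \tr (S *m T).

Definition intmx (R : realType) (m n : nat) (g : 'M[int]_(m, n)) : 'M[R]_(m, n) :=
  map_mx (fun z : int => z%:~R) g.

Definition qform (R : realType) (n : nat) (S : 'M[R]_n) (v : 'rV[int]_n) : R :=
  (intmx R v *m S *m (intmx R v)^T) 0 0.

Definition symmetric_mx (R : realType) (n : nat) (S : 'M[R]_n) : Prop := S^T = S.

Definition pos_def (R : realType) (n : nat) (S : 'M[R]_n) : Prop :=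
  forall x : 'rV[R]_n, x != 0 -> 0 < (x *m S *m x^T) 0 0.

(* GL_n(Z): integer matrices invertible over Z (det = +-1) *)
Definition GLnZ (n : nat) (g : 'M[int]_n) : Prop := g \in unitmx.

(* The family e_1, ..., e_{i-1}, v is primitive, i.e. extends to a basis of
   Z^n: there is B in GL_n(Z) whose rows 0..i-1 are e_1..e_{i-1} and whose
   row i is v (indices 0-based). *)
Definition primitive_ext (n : nat) (i : 'I_n) (v : 'rV[int]_n) : Prop :=
  exists B : 'M[int]_n, GLnZ B /\
    (forall j : 'I_n, (j < i)%N -> row j B = row j 1%:M) /\ row i B = v.

Definition minkowski_reduced (R : realType) (n : nat) (S : 'M[R]_n) : Prop :=
  forall i : 'I_n,
    (exists v, primitive_ext i v /\ qform S v = S i i) /\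
    (forall v, primitive_ext i v -> S i i <= qform S v).

Definition venkov_reduced (R : realType) (n : nat) (S : 'M[R]_n) : Prop :=
  forall g : 'M[int]_n, GLnZ g ->
    bullet S 1%:M <= bullet (intmx R g *m S *m (intmx R g)^T) 1%:M.

(* After conjugating by a permutation we may assume the diagonal of T is
   increasing.  Both reductions then amount to the condition T_kk <= q(z) for
   every integral z whose last nonzero entry is a 1 in position k.  They imply
   it: for Venkov reduction take for g the identity with row k replaced by z,
   for Minkowski reduction note that e_1, ..., e_(k-1), z is primitive.
   Conversely, for n <= 4 the condition gives T_ll <= q(x) whenever x_l <> 0.
   Let m be the last nonzero entry of x, in position k, and |m| >= 2.
   Rounding the first k coordinates of x/m to integers one at a time costs at
   most T_jj/4 <= T_kk/4 each, so T_kk <= q(x)/m^2 + (k/4) T_kk, and k <= 3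
   gives q(x) >= m^2 T_kk/4 >= T_kk.  Summing over the rows of g in GL_n(Z),
   matched with the diagonal by a nonvanishing term of det g, gives Venkov
   reduction; an extension of e_1, ..., e_(i-1) to a basis has a nonzero
   entry at some l >= i, which gives Minkowski reduction. *)
From HB Require Import structures.
From mathcomp Require Import all_boot all_order all_algebra all_fingroup.
From mathcomp Require Import reals.
From mathcomp Require Import ring lra zify.
Set Implicit Arguments. Unset Strict Implicit. Unset Printing Implicit Defensive.
Import Order.TTheory GRing.Theory Num.Theory.
Local Open Scope ring_scope.

Section BilinearForm.
Variables (R : comPzRingType) (n : nat) (T : 'M[R]_n).

Definition bform (x y : 'rV[R]_n) : R := (x *m T *m y^T) 0 0.
Definition qf (x : 'rV[R]_n) : R := bform x x.

Lemma bformDl x y z : bform (x + y) z = bform x z + bform y z.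
Proof. by rewrite /bform !mulmxDl mxE. Qed.

Lemma bformDr x y z : bform x (y + z) = bform x y + bform x z.
Proof. by rewrite /bform linearD /= mulmxDr mxE. Qed.

Lemma bformZl a x y : bform (a *: x) y = a * bform x y.
Proof. by rewrite /bform -!scalemxAl mxE. Qed.

Lemma bformZr a x y : bform x (a *: y) = a * bform x y.
Proof. by rewrite /bform linearZ /= -scalemxAr mxE. Qed.

Lemma qfDZ x e t :
  qf (x + t *: e) = qf x + t * (bform x e + bform e x) + t ^+ 2 * qf e.
Proof. by rewrite /qf !bformDl !bformDr !bformZl !bformZr; ring. Qed.

Lemma qfZ a x : qf (a *: x) = a ^+ 2 * qf x.
Proof. by rewrite /qf bformZl bformZr mulrA -expr2. Qed.

Lemma qf_delta i : qf (delta_mx 0 i) = T i i.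
Proof. by rewrite /qf /bform -rowE trmx_delta -colE !mxE. Qed.

End BilinearForm.

Lemma quad_int_shift_le (R : archiRealFieldType) (b d x : R) : 0 <= d ->
  exists a : int, (a%:~R - x) * b + (a%:~R - x) ^+ 2 * d <= d / 4.
Proof.
move=> d_ge0; pose f t := t * b + t ^+ 2 * d.
pose th := x - (Num.floor x)%:~R.
have /andP[th_ge0 th_le1] : 0 <= th <= 1.
  by have := floor_itv x; rewrite intrD /th => /andP[? ?]; apply/andP; lra.
(* f(-th) and f(1-th) cannot both exceed d/4: this combination of them is <= d/4 *)
have conv : (1 - th) * f (- th) + th * f (1 - th) = th * (1 - th) * d.
  by rewrite /f; ring.
have [f_le|f_gt] := leP (f (- th)) (d / 4).
  by exists (Num.floor x); rewrite -opprB.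
exists (Num.floor x + 1); rewrite intrD (_ : _ - x = 1 - th); last by rewrite /th; ring.
have th_gt0 : 0 < th.
  by rewrite lt_def th_ge0 andbT; apply: contraTneq f_gt => ->; rewrite /f; lra.
have := sqr_ge0 (th - 1 / 2); rewrite -/(f _); nra.
Qed.

Definition int_prefix (R : pzRingType) n m (w : 'rV[int]_n) (c : 'rV[R]_n) :=
  \row_j if (j < m)%N then (w 0 j)%:~R else c 0 j : R.

Lemma qf_int_prefix_le (R : archiRealFieldType) n (T : 'M[R]_n) (M : R) m :
  (m <= n)%N -> (forall j : 'I_n, (j < m)%N -> 0 <= T j j <= M) ->
  forall c, exists w, qf T (int_prefix m w c) <= qf T c + m%:R * M / 4.
Proof.
elim: m => [|m IH] m_le T_le c.
  exists 0; rewrite (_ : int_prefix 0 0 c = c) ?mul0r ?addr0 //.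
  by apply/rowP => j; rewrite mxE.
have [w Hw] := IH (ltnW m_le) (fun j jm => T_le j (ltnW jm)) c.
pose j0 := Ordinal m_le; set y := int_prefix m w c in Hw.
pose e : 'rV[R]_n := delta_mx 0 j0.
have /andP[d_ge0 d_le] := T_le j0 (ltnSn m).
have [a Ha] := quad_int_shift_le (bform T y e + bform T e y) (c 0 j0) d_ge0.
exists (\row_j if j == j0 then a else w 0 j).
have -> : int_prefix m.+1 (\row_j if j == j0 then a else w 0 j) c
          = y + (a%:~R - c 0 j0) *: e.
  apply/rowP => j; rewrite !mxE -val_eqE /=.
  case: (ltngtP j m) => [jm|mj|jm].
  - by rewrite ltnS ltnW // mulr0 addr0.
  - by rewrite ltnS leqNgt mj mulr0 addr0.
  have -> : j = j0 by exact: val_inj.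
  by rewrite ltnSn mulr1; ring.
rewrite qfDZ qf_delta -natr1; lra.
Qed.

Definition diag_sorted (R : numDomainType) n (T : 'M[R]_n) :=
  forall j l : 'I_n, (j <= l)%N -> T j j <= T l l.

Definition triangular_reduced (R : realType) n (T : 'M[R]_n) :=
  forall (k : 'I_n) (z : 'rV[int]_n),
    z 0 k = 1 -> (forall j : 'I_n, (k < j)%N -> z 0 j = 0) -> T k k <= qform T z.

Lemma qformN (R : realType) n (T : 'M[R]_n) v : qform T (- v) = qform T v.
Proof.
change (qf T (intmx R (- v)) = qf T (intmx R v)).
have -> : intmx R (- v) = - intmx R v by apply/matrixP => i j; rewrite !mxE intrN.
by rewrite -scaleN1r qfZ sqrrN expr1n mul1r.
Qed.

Lemma intmx_delta (R : realType) m n i j :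
  intmx R (delta_mx i j : 'M[int]_(m, n)) = delta_mx i j.
Proof. exact: (map_delta_mx (intr : {rmorphism int -> R})). Qed.

Lemma qform_delta (R : realType) n (T : 'M[R]_n) (i : 'I_n) :
  qform T (delta_mx 0 i) = T i i.
Proof. by rewrite /qform intmx_delta; exact: qf_delta. Qed.

Lemma tr_conj_qform (R : realType) n (T : 'M[R]_n) (h : 'M[int]_n) :
  \tr (intmx R h *m T *m (intmx R h)^T) = \sum_r qform T (row r h).
Proof.
rewrite /mxtrace; apply: eq_bigr => r _; rewrite /qform !mxE; apply: eq_bigr => j _.
by rewrite !mxE; congr (_ * _); apply: eq_bigr => a _; rewrite !mxE.
Qed.

Lemma unitmx_transversal (R : comUnitRingType) n (h : 'M[R]_n) :
  h \in unitmx -> exists s : 'S_n, forall i, h i (s i) != 0.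
Proof.
case: (pickP (fun s : 'S_n => [forall i, h i (s i) != 0])) => [s /forallP|none].
  by exists s.
rewrite unitmxE (_ : \det h = 0) ?unitr0 // /determinant big1 // => s _.
have /forallPn[i /negPn/eqP hi0] := none s.
by rewrite (bigD1 i) //= hi0 mul0r mulr0.
Qed.

Lemma primitive_ext_nz n (i : 'I_n) (v : 'rV[int]_n) :
  primitive_ext i v -> exists2 l : 'I_n, (i <= l)%N & v 0 l != 0.
Proof.
case=> B [B_unit [B_rows B_i]].
case: (boolP [exists l : 'I_n, (i <= l)%N && (v 0 l != 0)]).
  by case/existsP => l /andP[il vl]; exists l.
move/existsPn => v_tail; have {}v_tail (l : 'I_n) : (i <= l)%N -> v 0 l = 0.
  by move=> il; have := v_tail l; rewrite il negbK => /eqP.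
have vB : v *m B = v *m 1%:M.
  rewrite !mulmx_sum_row; apply: eq_bigr => r _.
  by case: (ltnP r i) => [ri|ir]; [rewrite B_rows | rewrite v_tail // !scale0r].
have : v = delta_mx 0 i.
  by apply: (can_inj (mulmxK B_unit)); rewrite vB mulmx1 -rowE B_i.
by move/(congr1 (fun u : 'rV_n => u 0 i)); rewrite v_tail // mxE !eqxx.
Qed.

Section SmallDimension.
Variables (R : realType) (n : nat) (T : 'M[R]_n).
Hypotheses (n_le4 : (n <= 4)%N) (T_diag_ge0 : forall j, 0 <= T j j).
Hypotheses (T_sorted : diag_sorted T) (T_tri : triangular_reduced T).

Lemma qform_ge_diag_last (x : 'rV[int]_n) (k : 'I_n) : x 0 k != 0 ->
  (forall j : 'I_n, (k < j)%N -> x 0 j = 0) -> T k k <= qform T x.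
Proof.
move=> xk_neq0 x_last.
have [xk1|xk_neq1] := eqVneq (x 0 k) 1; first exact: T_tri.
have [xkN1|xk_neqN1] := eqVneq (x 0 k) (-1).
  by rewrite -qformN; apply: T_tri => [|j kj]; rewrite mxE ?xkN1 ?opprK ?x_last ?oppr0.
pose m : R := (x 0 k)%:~R.
have m_neq0 : m != 0 by rewrite intr_eq0.
have m2_ge4 : 4 <= m ^+ 2.
  have : (2 <= x 0 k) || (x 0 k <= -2) by lia.
  by case/orP; rewrite -(ler_int R) => ?; nra.
pose c := m^-1 *: intmx R x.
have T_le (j : 'I_n) : (j < k)%N -> 0 <= T j j <= T k k.
  by move=> jk; rewrite T_diag_ge0 T_sorted // ltnW.
have [w Hw] := qf_int_prefix_le (ltnW (ltn_ord k)) T_le c.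
pose z : 'rV[int]_n := \row_j if (j < k)%N then w 0 j else (j == k)%:R.
have z_prefix : intmx R z = int_prefix k w c.
  apply/rowP => j; rewrite !mxE; case: ifP => // jk.
  have [->|j_neq_k] := eqVneq j k; first by rewrite mulVf.
  by rewrite x_last ?mulr0 // ltn_neqAle eq_sym j_neq_k leqNgt jk.
have Tkk_le : T k k <= qf T c + k%:R * T k k / 4.
  apply: le_trans Hw; rewrite -z_prefix; apply: T_tri => [|j kj].
    by rewrite mxE ltnn eqxx.
  by rewrite mxE ltnNge (ltnW kj) -val_eqE gtn_eqF.
have qx : qform T x = m ^+ 2 * qf T c.
  by rewrite -qfZ scalerA mulfV // scale1r.
have k_le3 : (k%:R : R) <= 3 by rewrite (ler_nat R k 3); have := ltn_ord k; lia.
have qc_ge : T k k / 4 <= qf T c.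
  by have := ler_wpM2r (T_diag_ge0 k) k_le3; lra.
have := ler_wpM2r (le_trans (divr_ge0 (T_diag_ge0 k) (ler0n R 4)) qc_ge) m2_ge4.
by rewrite qx; lra.
Qed.

Lemma qform_ge_diag (x : 'rV[int]_n) (l : 'I_n) : x 0 l != 0 -> T l l <= qform T x.
Proof.
move=> xl_neq0.
have [k xk_neq0 k_max] := @arg_maxnP _ l (fun j => x 0 j != 0) val xl_neq0.
apply: le_trans (T_sorted (k_max l xl_neq0)) (qform_ge_diag_last xk_neq0 _).
by move=> j kj; apply/eqP; apply: contraTT kj => /k_max; rewrite -leqNgt.
Qed.

Lemma triangular_reduced_venkov : venkov_reduced T.
Proof.
move=> g /unitmx_transversal[s g_s]; rewrite /bullet !mulmx1 tr_conj_qform.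
rewrite /mxtrace (reindex_inj (@perm_inj _ s)) /=.
by apply: ler_sum => r _; apply: qform_ge_diag; rewrite mxE.
Qed.

Lemma triangular_reduced_minkowski : minkowski_reduced T.
Proof.
move=> i; split.
  exists (delta_mx 0 i); split; last exact: qform_delta.
  by exists 1%:M; split; [exact: unitmx1 | split => //; exact: row1].
move=> v /primitive_ext_nz[l il vl_neq0].
exact: le_trans (T_sorted il) (qform_ge_diag vl_neq0).
Qed.

End SmallDimension.

Definition idmx_with_row n (k : 'I_n) (z : 'rV[int]_n) : 'M[int]_n :=
  \matrix_(a, b) if a == k then z 0 b else (a == b)%:R.

Lemma row_idmx_with_row n (k : 'I_n) (z : 'rV[int]_n) : row k (idmx_with_row k z) = z.
Proof. by apply/rowP => b; rewrite !mxE eqxx. Qed.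

Lemma row_idmx_with_row_neq n (k j : 'I_n) (z : 'rV[int]_n) :
  j != k -> row j (idmx_with_row k z) = row j 1%:M.
Proof. by move=> j_neq_k; apply/rowP => b; rewrite !mxE (negbTE j_neq_k). Qed.

Lemma idmx_with_row_unit n (k : 'I_n) (z : 'rV[int]_n) : z 0 k = 1 ->
  (forall j : 'I_n, (k < j)%N -> z 0 j = 0) -> GLnZ (idmx_with_row k z).
Proof.
move=> zk z_last; rewrite /GLnZ unitmxE det_trig.
  rewrite big1 ?unitr1 // => i _; rewrite mxE.
  by case: eqVneq => [->|_]; rewrite ?eqxx.
apply/forallP => i; apply/forallP => j; apply/implyP => ij; rewrite mxE.
by case: (eqVneq i k) => [ik|_]; [rewrite z_last -?ik | rewrite -val_eqE ltn_eqF].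
Qed.

Lemma venkov_triangular_reduced (R : realType) n (T : 'M[R]_n) :
  venkov_reduced T -> triangular_reduced T.
Proof.
move=> T_venkov k z zk z_last.
have := T_venkov _ (idmx_with_row_unit zk z_last).
rewrite /bullet !mulmx1 tr_conj_qform /mxtrace.
rewrite (bigD1 k) //= [X in _ <= X](bigD1 k) //= row_idmx_with_row.
have -> : \sum_(j < n | j != k) qform T (row j (idmx_with_row k z))
          = \sum_(j < n | j != k) T j j.
  by apply: eq_bigr => j j_neq_k; rewrite row_idmx_with_row_neq // row1 qform_delta.
by rewrite lerD2r.
Qed.

Lemma minkowski_triangular_reduced (R : realType) n (T : 'M[R]_n) :
  minkowski_reduced T -> triangular_reduced T.
Proof.
move=> T_mink k z zk z_last; apply: (T_mink k).2.
exists (idmx_with_row k z); split; first exact: idmx_with_row_unit.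
split; last exact: row_idmx_with_row.
by move=> j jk; rewrite row_idmx_with_row_neq // neq_ltn jk.
Qed.

Lemma minkowski_diag_sorted (R : realType) n (T : 'M[R]_n) :
  minkowski_reduced T -> diag_sorted T.
Proof.
move=> T_mink j l jl; rewrite -(qform_delta T l); apply: (T_mink j).2.
exists (perm_mx (tperm j l)); split; first exact: unitmx_perm.
have row_tperm r : row r (perm_mx (tperm j l)) = delta_mx 0 (tperm j l r).
  by apply/rowP => b; rewrite !mxE eq_sym.
split; last by rewrite row_tperm tpermL.
move=> r rj; rewrite row_tperm row1 tpermD // -val_eqE /= neq_ltn.
  by rewrite rj orbT.
by rewrite (leq_trans rj jl) orbT.
Qed.

Lemma exists_perm_sorted (R : realDomainType) n (f : 'I_n -> R) :
  exists s : 'S_n, forall j l : 'I_n, (j <= l)%N -> f (s j) <= f (s l).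
Proof.
pose Phi (s : 'S_n) : R := \sum_(j < n) j%:R * f (s j).
have [s _ s_max] := @arg_maxP _ R _ 1%g xpredT Phi isT.
exists s => j l jl; rewrite leNgt; apply/negP => f_lt.
have jl_neq : j != l by apply: contraTneq f_lt => ->; rewrite ltxx.
have jl_lt : (j < l)%N by rewrite ltn_neqAle jl andbT.
(* transposing j and l in s would increase Phi *)
have Phi_swap : Phi (tperm j l * s)%g - Phi s = (l%:R - j%:R) * (f (s j) - f (s l)).
  rewrite /Phi (reindex_inj (@perm_inj _ (tperm j l))) -sumrB /=.
  rewrite (bigD1 j) // (bigD1 l) /=; last by rewrite eq_sym.
  rewrite big1 => [|y /andP[yj yl]]; last first.
    by rewrite permM tpermK tpermD 1?eq_sym // subrr.
  by rewrite !permM !tpermK tpermL tpermR; ring.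
have Phi_le : Phi (tperm j l * s)%g <= Phi s := s_max _ isT.
have : (j%:R : R) < l%:R by rewrite ltr_nat.
nra.
Qed.

Lemma intmx_perm (R : realType) n (s : 'S_n) : intmx R (perm_mx s) = perm_mx s.
Proof. exact: (map_perm_mx (intr : {rmorphism int -> R})). Qed.

Lemma intmxM (R : realType) m n p (A : 'M[int]_(m, n)) (B : 'M[int]_(n, p)) :
  intmx R (A *m B) = intmx R A *m intmx R B.
Proof. exact: (map_mxM (intr : {rmorphism int -> R})). Qed.

Lemma conj_perm_mxE (R : realType) n (S : 'M[R]_n) (s : 'S_n) i j :
  (intmx R (perm_mx s) *m S *m (intmx R (perm_mx s))^T) i j = S (s i) (s j).
Proof. by rewrite intmx_perm -row_permE tr_perm_mx -col_permE !mxE. Qed.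

Lemma venkov_reduced_conj_perm (R : realType) n (S : 'M[R]_n) (s : 'S_n) :
  venkov_reduced (intmx R (perm_mx s) *m S *m (intmx R (perm_mx s))^T)
  <-> venkov_reduced S.
Proof.
pose conj (t : 'S_n) (S' : 'M[R]_n) :=
  intmx R (perm_mx t) *m S' *m (intmx R (perm_mx t))^T.
suff conj_venkov t S' : venkov_reduced S' -> venkov_reduced (conj t S').
  split=> [/(conj_venkov s^-1%g)|]; last exact: conj_venkov.
  congr venkov_reduced; apply/matrixP => i j.
  by rewrite !conj_perm_mxE !permKV.
move=> S'_venkov g g_unit.
have tr_conj : \tr (conj t S') = \tr S'.
  by rewrite mxtrace_mulC mulmxA intmx_perm tr_perm_mx -perm_mxM mulVg perm_mx1 mul1mx.
have gt_unit : GLnZ (g *m perm_mx t) by rewrite /GLnZ unitmx_mul g_unit unitmx_perm.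
have := S'_venkov _ gt_unit; rewrite /bullet !mulmx1 tr_conj.
by rewrite intmxM trmx_mul !mulmxA.
Qed.

Lemma pos_def_diag_gt0 (R : realType) n (S : 'M[R]_n) :
  pos_def S -> forall i, 0 < S i i.
Proof.
move=> S_pd i; rewrite -(qf_delta S); apply: S_pd.
by apply/eqP => /matrixP/(_ 0 i); rewrite !mxE !eqxx => /eqP; rewrite oner_eq0.
Qed.

Theorem mainTheorem3 (R : realType) (n : nat) (S : 'M[R]_n) :
  (n <= 4)%N -> symmetric_mx S -> pos_def S ->
  (venkov_reduced S <->
   exists s : 'S_n,
     minkowski_reduced (intmx R (perm_mx s) *m S *m (intmx R (perm_mx s))^T)).
Proof.
move=> n_le4 _ S_pd.
have conj_diag_ge0 (s : 'S_n) j :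
    0 <= (intmx R (perm_mx s) *m S *m (intmx R (perm_mx s))^T) j j.
  by rewrite conj_perm_mxE ltW // pos_def_diag_gt0.
split=> [S_venkov | [s S_mink]].
  have [s s_sorted] := exists_perm_sorted (fun i => S i i).
  exists s; apply: triangular_reduced_minkowski => //.
    by move=> j l jl; rewrite !conj_perm_mxE s_sorted.
  by apply: venkov_triangular_reduced; rewrite venkov_reduced_conj_perm.
rewrite -(venkov_reduced_conj_perm S s); apply: triangular_reduced_venkov => //.
  exact: minkowski_diag_sorted.
exact: minkowski_triangular_reduced.
Qed.
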